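(* For every random variable $f$, the quantization $\widehat f$ is a well-defined bounded self-adjoint operator on $H$. If moreover $f\ge 0$, then $\|\widehat f\|\le\|f\|$, where $\|f\|=\left(\int|f|^2d\nu\right)^{1/2}$.
   Context: $(\Omega,\mathcal{A},\nu)$ is a probability space and $H=L_2(\Omega,\mathcal{A},\nu)$ is the complex Hilbert space with inner product $\langle f,g\rangle=\int\bar f g\,d\nu$. A random variable is a real-valued $f\in H$. For a random variable $f\ge 0$, its quantization $\widehat f$ is the operator on $H$ given by $(\widehat f g)(y)=\int\min[f(x),f(y)]\,g(x)\,d\nu(x)$. For an arbitrary random variable $f$, write $f=f^+-f^-$ with $f^+=\max(f,0)$, $f^-=-\min(f,0)$, and define $\widehat f=\widehat{f^+}-\widehat{f^-}$. *)

From HB Require Import structures.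
From mathcomp Require Import all_boot all_order all_algebra.
From mathcomp Require Import all_classical all_reals all_analysis.
From mathcomp Require Import complex.
Set Implicit Arguments. Unset Strict Implicit. Unset Printing Implicit Defensive.
Import Order.TTheory GRing.Theory Num.Theory.
Local Open Scope ring_scope.
Local Open Scope classical_set_scope.

Section Quantization.
Context {d : measure_display} {T : measurableType d} {R : realType}.
Variable P : probability T R.

Local Notation C := (complex R).

Definition cint (h : T -> C) : C :=
  ((Rintegral P setT (fun x => complex.Re (h x))) +i* (Rintegral P setT (fun x => complex.Im (h x))))%C.

Definition cabs2 (z : C) : R := complex.Re z ^+ 2 + complex.Im z ^+ 2.

Definition cintegrable (h : T -> C) : Prop :=
  P.-integrable setT (fun x => (complex.Re (h x))%:E) /\ P.-integrable setT (fun x => (complex.Im (h x))%:E).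

Definition inH (g : T -> C) : Prop :=
  measurable_fun setT (fun x => complex.Re (g x)) /\ measurable_fun setT (fun x => complex.Im (g x)) /\
  P.-integrable setT (fun x => (cabs2 (g x))%:E).

(* a random variable: a real-valued element of H *)
Definition is_random_variable (f : T -> R) : Prop :=
  measurable_fun setT f /\ P.-integrable setT (fun x => (f x ^+ 2)%:E).

Definition inner (u v : T -> C) : C := cint (fun x => (conjc (u x)) * v x).

Definition hnorm (g : T -> C) : R := Num.sqrt (Rintegral P setT (fun x => cabs2 (g x))).

Definition rnorm (f : T -> R) : R := Num.sqrt (Rintegral P setT (fun x => f x ^+ 2)).

Definition fplus (f : T -> R) : T -> R := fun x => Num.max (f x) 0.
Definition fminus (f : T -> R) : T -> R := fun x => - Num.min (f x) 0.

Definition quant_nonneg (f : T -> R) (g : T -> C) : T -> C :=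
  fun y => cint (fun x => ((Num.min (f x) (f y))%:C)%C * g x).

Definition quant (f : T -> R) (g : T -> C) : T -> C :=
  fun y => quant_nonneg (fplus f) g y - quant_nonneg (fminus f) g y.

Definition well_defined_bounded_selfadjoint (Q : (T -> C) -> (T -> C)) (f : T -> R) : Prop :=
  (* the defining integrals converge absolutely for nu-a.e. y *)
  (forall g, inH g ->
     {ae P, forall y, cintegrable (fun x => ((Num.min (fplus f x) (fplus f y))%:C)%C * g x)
                   /\ cintegrable (fun x => ((Num.min (fminus f x) (fminus f y))%:C)%C * g x)}) /\
  (forall g, inH g -> inH (Q g)) /\
  (* Q is compatible with nu-a.e. equality, hence defined on equivalence classes *)
  (forall g1 g2, inH g1 -> inH g2 -> {ae P, forall x, g1 x = g2 x} ->
     {ae P, forall y, Q g1 y = Q g2 y}) /\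
  (forall (a b : C) g h, inH g -> inH h ->
     {ae P, forall y, Q (fun x => a * g x + b * h x) y = a * Q g y + b * Q h y}) /\
  (exists M : R, 0 <= M /\ forall g, inH g -> hnorm (Q g) <= M * hnorm g) /\
  (forall g h, inH g -> inH h -> inner (Q g) h = inner g (Q h)).

End Quantization.

From HB Require Import structures.
From mathcomp Require Import all_boot all_order all_algebra.
From mathcomp Require Import all_classical all_reals all_analysis.
From mathcomp Require Import complex measurable_realfun.
From mathcomp Require Import ring lra.
Import Order.TTheory GRing.Theory Num.Theory.
Local Open Scope ring_scope.
Local Open Scope classical_set_scope.

(* For F >= 0 the kernel min(F x, F y) is at most F y, so
   |\int min(F x, F y) u(x) dnu(x)| <= F y \int |u| <= F y ||u|| by Cauchy-Schwarz
   on a probability space.  Since f^+ + f^- = |f|, this gives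
   |f^ u (y)| <= |f y| ||u||, and integrating the square yields ||f^ u|| <= ||f|| ||u||
   for every random variable f.  The kernel is symmetric and the product integrand
   min(F x, F y) u(x) v(y) is dominated by |u x| * (F y |v y|), which is integrable
   for nu (x) nu, so self-adjointness follows from Fubini.  Finally f^ commutes with
   taking real and imaginary parts, which reduces everything to real-valued u. *)

Lemma sqr_le_of_normr_le {R : realDomainType} {a b : R} :
  `|a| <= b -> a ^+ 2 <= b ^+ 2.
Proof.
move=> ab; rewrite -[a ^+ 2]real_normK ?num_real //.
have := normr_ge0 a; nra.
Qed.

Lemma normrM_le_sqrD {R : realDomainType} (a b : R) : `|a * b| <= a ^+ 2 + b ^+ 2.
Proof.
rewrite normrM -(real_normK (num_real a)) -(real_normK (num_real b)).
have := sqr_ge0 (`|a| - `|b|); have := normr_ge0 a; have := normr_ge0 b.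
nra.
Qed.

Section SquareIntegrable.
Context {d : measure_display} {T : measurableType d} {R : realType}.
Variable P : probability T R.
Local Notation RI := (Rintegral P setT).
Local Notation L2 := (is_random_variable P).

Definition Rintegrable (u : T -> R) := P.-integrable setT (fun x => (u x)%:E).

Lemma Rintegrable_measurable {u : T -> R} : Rintegrable u -> measurable_fun setT u.
Proof. by move=> /integrableP[/measurable_EFinP]. Qed.

Lemma integral_EFin {u : T -> R} :
  Rintegrable u -> (\int[P]_x (u x)%:E = (RI u)%:E)%E.
Proof. by move=> iu; rewrite /Rintegral fineK //; exact: integrable_fin_num. Qed.

Lemma eq_Rintegrable {u v : T -> R} : u =1 v -> Rintegrable u -> Rintegrable v.
Proof. by move=> /funext ->. Qed.

Lemma le_Rintegrable {u v : T -> R} : measurable_fun setT u ->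
  (forall x, `|u x| <= `|v x|) -> Rintegrable v -> Rintegrable u.
Proof.
move=> mu uv iv; apply: (le_integrable measurableT _ _ iv).
  exact/measurable_EFinP.
by move=> x _; rewrite !abse_EFin lee_fin.
Qed.

Lemma RintegrableD {u v : T -> R} :
  Rintegrable u -> Rintegrable v -> Rintegrable (fun x => u x + v x).
Proof. by move=> iu iv; apply: eq_integrable (integrableD measurableT iu iv). Qed.

Lemma RintegrableB {u v : T -> R} :
  Rintegrable u -> Rintegrable v -> Rintegrable (fun x => u x - v x).
Proof. by move=> iu iv; apply: eq_integrable (integrableB measurableT iu iv). Qed.

Lemma RintegrableZ c {u : T -> R} : Rintegrable u -> Rintegrable (fun x => c * u x).
Proof. by move=> iu; apply: eq_integrable (integrableZl measurableT c iu). Qed.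

Lemma Rintegrable_cst c : Rintegrable (fun _ => c).
Proof. exact: finite_measure_integrable_cst. Qed.

Lemma Rintegral_cst_prob c : RI (fun _ => c) = c.
Proof. by rewrite Rintegral_cst // (congr1 fine (probability_setT P)) mulr1. Qed.

Lemma rv_cst c : L2 (fun _ => c).
Proof. split; [exact: measurable_cst | exact: Rintegrable_cst]. Qed.

Lemma eq_rv {u v : T -> R} : u =1 v -> L2 u -> L2 v.
Proof. by move=> /funext ->. Qed.

Lemma rv_Rintegrable_mul {u v : T -> R} :
  L2 u -> L2 v -> Rintegrable (fun x => u x * v x).
Proof.
move=> [mu iu] [mv iv]; apply: le_Rintegrable (RintegrableD iu iv).
  exact: measurable_funM.
move=> x /=; apply: le_trans (normrM_le_sqrD _ _) _.
by rewrite ger0_norm // addr_ge0 // sqr_ge0.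
Qed.

Lemma rv_Rintegrable {u : T -> R} : L2 u -> Rintegrable u.
Proof.
move=> hu; apply: eq_Rintegrable _ (rv_Rintegrable_mul hu (rv_cst 1)) => x.
by rewrite mulr1.
Qed.

Lemma rv_dominated (c : R) {u v : T -> R} : measurable_fun setT u -> L2 v ->
  (forall x, `|u x| <= c * `|v x|) -> L2 u.
Proof.
move=> mu [_ iv] uv; split => //.
apply: le_Rintegrable (RintegrableZ (c ^+ 2) iv); first exact: measurable_funX.
move=> x; rewrite (ger0_norm (sqr_ge0 _)).
rewrite (ger0_norm (mulr_ge0 (sqr_ge0 _) (sqr_ge0 _))).
by rewrite -[v x ^+ 2]real_normK ?num_real // -exprMn; exact: sqr_le_of_normr_le.
Qed.

Lemma rv_norm {u : T -> R} : L2 u -> L2 (fun x => `|u x|).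
Proof.
move=> hu; apply: (rv_dominated 1 _ hu).
  exact: measurableT_comp hu.1.
by move=> x; rewrite normr_id mul1r.
Qed.

Lemma rv_lin a b {u v : T -> R} : L2 u -> L2 v -> L2 (fun x => a * u x + b * v x).
Proof.
move=> [mu iu] [mv iv].
have mlin : measurable_fun setT (fun x => a * u x + b * v x).
  by apply: measurable_funD; apply: measurable_funM => //; exact: measurable_cst.
split => //.
apply: (le_Rintegrable (v := fun x => 2 * (a ^+ 2 * u x ^+ 2) + 2 * (b ^+ 2 * v x ^+ 2))).
- exact: measurable_funX.
- move=> x; rewrite !ger0_norm ?sqr_ge0 //; last first.
    by rewrite addr_ge0 // mulr_ge0 // mulr_ge0 // sqr_ge0.
  have := sqr_ge0 (a * u x - b * v x); nra.
- by apply: RintegrableD; apply: RintegrableZ; apply: RintegrableZ.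
Qed.

(* The variance of |u| is nonnegative. *)
Lemma sqr_Rintegral_norm_le {u : T -> R} : L2 u ->
  RI (fun x => `|u x|) ^+ 2 <= RI (fun x => u x ^+ 2).
Proof.
move=> hu; set A := RI (fun x => `|u x|).
have ia : Rintegrable (fun x => `|u x|) by exact/rv_Rintegrable/rv_norm.
have : 0 <= RI (fun x => (`|u x| - A) ^+ 2).
  by apply: Rintegral_ge0 => x _; exact: sqr_ge0.
rewrite (_ : (fun x => _) = (fun x => u x ^+ 2 - 2 * A * `|u x| + A ^+ 2)); last first.
  by apply/funext=> x; rewrite -(real_normK (num_real (u x))); ring.
have i2A : Rintegrable (fun x => 2 * A * `|u x|) by exact: RintegrableZ.
rewrite (RintegralD measurableT (RintegrableB hu.2 i2A) (Rintegrable_cst _)).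
rewrite (RintegralB measurableT hu.2 i2A) (RintegralZl _ measurableT ia).
rewrite Rintegral_cst_prob -/A; nra.
Qed.

Lemma integrable_prod_dominated {h : T * T -> R} {a b : T -> R} :
  measurable_fun setT h -> (forall x y, `|h (x, y)| <= a y * b x) ->
  (forall x, 0 <= b x) -> Rintegrable a -> Rintegrable b ->
  (P \x P)%E.-integrable setT (fun z => (h z)%:E).
Proof.
move=> mh hab b0 ia ib.
have mEh : measurable_fun setT (fun z => (h z)%:E) by exact/measurable_EFinP.
apply/(integrable21ltyP P P mEh).
apply: (@le_lt_trans _ _ (\int[P]_y ((a y * RI b)%:E))%E); last first.
  rewrite integral_EFin ?ltry //.
  by apply: eq_Rintegrable _ (RintegrableZ (RI b) ia) => y; rewrite mulrC.
apply: ge0_le_integral => //.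
- by move=> y _; apply: integral_ge0.
- apply: (measurable_fun_fubini_tonelli_G (fun z => `|(h z)%:E|%E)) => [|z].
    exact: measurableT_comp mEh.
  exact: abse_ge0.
- apply/measurable_EFinP; apply: measurable_funM; first exact: Rintegrable_measurable.
  exact: measurable_cst.
move=> y _; rewrite -(RintegralZl _ measurableT ib) -integral_EFin; last first.
  exact: RintegrableZ.
apply: ge0_le_integral => //.
- apply: measurableT_comp => //.
  by apply/measurable_EFinP; exact: (measurable_fun_pair1 y mh).
- apply/measurable_EFinP; apply: measurable_funM; first exact: measurable_cst.
  exact: Rintegrable_measurable.
by move=> x _; rewrite abse_EFin lee_fin.
Qed.

Definition min_kernel (F u : T -> R) (y : T) : R :=
  RI (fun x => Num.min (F x) (F y) * u x).

Section MinKernel.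
Context {F : T -> R} (F_rv : L2 F) (F_ge0 : forall x, 0 <= F x).

Let min_ge0 x y : 0 <= Num.min (F x) (F y).
Proof. by rewrite le_min !F_ge0. Qed.

Let min_le x y : Num.min (F x) (F y) <= F y.
Proof. by rewrite ge_min lexx orbT. Qed.

Lemma Rintegrable_min_kernel {u : T -> R} y : L2 u ->
  Rintegrable (fun x => Num.min (F x) (F y) * u x).
Proof.
move=> hu; apply: le_Rintegrable (RintegrableZ (F y) (rv_Rintegrable hu)).
  apply: measurable_funM (hu.1).
  by apply: measurable_minr F_rv.1 _; exact: measurable_cst.
by move=> x; rewrite !normrM ler_wpM2r // !ger0_norm.
Qed.

Lemma measurable_min_kernel_integrand {u : T -> R} : measurable_fun setT u ->
  measurable_fun setT (fun z : T * T => Num.min (F z.1) (F z.2) * u z.1).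
Proof.
move=> mu; apply: measurable_funM; last exact: measurableT_comp.
by apply: measurable_minr; apply: measurableT_comp F_rv.1 _.
Qed.

Lemma measurable_min_kernel {u : T -> R} : L2 u -> measurable_fun setT (min_kernel F u).
Proof.
move=> hu.
have hi := integrable_prod_dominated (a := F) (b := fun x => `|u x|)
  (measurable_min_kernel_integrand hu.1)
  (fun x y => ltac:(by rewrite /= normrM ger0_norm // ler_wpM2r))
  (fun x => normr_ge0 _) (rv_Rintegrable F_rv) (rv_Rintegrable (rv_norm hu)).
exact: measurableT_comp (fine_measurable measurableT) (measurable_fubini_G hi).
Qed.

Lemma min_kernel_norm_le {u : T -> R} y : L2 u ->
  `|min_kernel F u y| <= F y * RI (fun x => `|u x|).
Proof.
move=> hu; have iu := Rintegrable_min_kernel y hu.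
apply: le_trans (le_normr_Rintegral measurableT iu) _.
rewrite -RintegralZl //; last exact: rv_Rintegrable (rv_norm hu).
apply: le_Rintegral => //.
- apply: le_Rintegrable (Rintegrable_min_kernel y hu) => [|x].
    exact: measurableT_comp (Rintegrable_measurable iu).
  by rewrite normr_id.
- exact: RintegrableZ (rv_Rintegrable (rv_norm hu)).
by move=> x _; rewrite normrM ger0_norm // ler_wpM2r.
Qed.

Lemma min_kernel_rv {u : T -> R} : L2 u -> L2 (min_kernel F u).
Proof.
move=> hu; apply: (rv_dominated (RI (fun x => `|u x|)) _ F_rv).
  exact: measurable_min_kernel.
by move=> y; rewrite (ger0_norm (F_ge0 y)) mulrC; exact: min_kernel_norm_le.
Qed.

Lemma min_kernel_lin a b {u v : T -> R} y : L2 u -> L2 v ->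
  min_kernel F (fun x => a * u x + b * v x) y =
  a * min_kernel F u y + b * min_kernel F v y.
Proof.
move=> hu hv; rewrite /min_kernel.
rewrite (eq_Rintegral _ (g := fun x => a * (Num.min (F x) (F y) * u x) +
                                      b * (Num.min (F x) (F y) * v x))); last first.
  by move=> x _; ring.
have [iu iv] := (Rintegrable_min_kernel y hu, Rintegrable_min_kernel y hv).
by rewrite RintegralD ?RintegralZl //; exact: RintegrableZ.
Qed.

Lemma min_kernel_ae_eq {u1 u2 : T -> R} y :
  measurable_fun setT u1 -> measurable_fun setT u2 ->
  {ae P, forall x, u1 x = u2 x} -> min_kernel F u1 y = min_kernel F u2 y.
Proof.
move=> mu1 mu2 u12; rewrite /min_kernel /Rintegral; congr fine.
have mmin : measurable_fun setT (fun x => Num.min (F x) (F y)).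
  by apply: measurable_minr F_rv.1 _; exact: measurable_cst.
apply: ae_eq_integral => //; try exact/measurable_EFinP/measurable_funM.
by apply: filterS u12 => x e _; rewrite e.
Qed.

Lemma min_kernel_sym {u v : T -> R} : L2 u -> L2 v ->
  RI (fun y => min_kernel F u y * v y) = RI (fun x => u x * min_kernel F v x).
Proof.
move=> hu hv.
pose h := fun z : T * T => Num.min (F z.1) (F z.2) * u z.1 * v z.2.
have mh : measurable_fun setT h.
  apply: measurable_funM; first exact: measurable_min_kernel_integrand hu.1.
  exact: measurableT_comp hv.1 _.
have hi := integrable_prod_dominated (a := fun y => F y * `|v y|)
  (b := fun x => `|u x|) mh (fun x y => ltac:(rewrite /h /= !normrM ger0_norm //
  [in X in _ <= X]mulrAC; by rewrite !ler_wpM2r)) (fun x => normr_ge0 _)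
  (rv_Rintegrable_mul F_rv (rv_norm hv)) (rv_Rintegrable (rv_norm hu)).
have inner_x x : (\int[P]_y (h (x, y))%:E = (u x * min_kernel F v x)%:E)%E.
  have iv := Rintegrable_min_kernel x hv.
  rewrite /min_kernel -RintegralZl // -integral_EFin; last exact: RintegrableZ.
  by apply: eq_integral => y _; congr EFin; rewrite /h /= minC; ring.
have inner_y y : (\int[P]_x (h (x, y))%:E = (min_kernel F u y * v y)%:E)%E.
  have iu := Rintegrable_min_kernel y hu.
  rewrite /min_kernel -RintegralZr // -integral_EFin //.
  by apply: eq_Rintegrable _ (RintegrableZ (v y) iu) => x; rewrite mulrC.
move: (Fubini hi).
under eq_integral => x _ do rewrite inner_x.
under [X in _ = X]eq_integral => y _ do rewrite inner_y.
rewrite (integral_EFin (rv_Rintegrable_mul hu (min_kernel_rv hv))).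
by rewrite (integral_EFin (rv_Rintegrable_mul (min_kernel_rv hu) hv)) => -[->].
Qed.

End MinKernel.

Lemma fplus_ge0 (f : T -> R) x : 0 <= fplus f x.
Proof. by rewrite /fplus le_max lexx orbT. Qed.

Lemma fminus_ge0 (f : T -> R) x : 0 <= fminus f x.
Proof. by rewrite /fminus oppr_ge0 ge_min lexx orbT. Qed.

Lemma fplusDfminus (f : T -> R) x : fplus f x + fminus f x = `|f x|.
Proof.
rewrite /fplus /fminus; have [f0|f0] := leP 0 (f x).
  by rewrite subr0 ger0_norm.
by rewrite sub0r ltr0_norm.
Qed.

Lemma rv_fplus {f : T -> R} : L2 f -> L2 (fplus f).
Proof.
move=> hf; apply: (rv_dominated 1 _ hf).
  by apply: measurable_maxr hf.1 _; exact: measurable_cst.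
move=> x; rewrite mul1r -(fplusDfminus f x) ger0_norm ?fplus_ge0 //.
by rewrite lerDl fminus_ge0.
Qed.

Lemma rv_fminus {f : T -> R} : L2 f -> L2 (fminus f).
Proof.
move=> hf; apply: (rv_dominated 1 _ hf).
  apply: (measurable_funN (f := fun x => Num.min (f x) 0)).
  by apply: measurable_minr hf.1 _; exact: measurable_cst.
move=> x; rewrite mul1r -(fplusDfminus f x) ger0_norm ?fminus_ge0 //.
by rewrite lerDr fplus_ge0.
Qed.

Definition quantR (f u : T -> R) (y : T) : R :=
  min_kernel (fplus f) u y - min_kernel (fminus f) u y.

Section RealQuantization.
Context {f : T -> R} (f_rv : L2 f).

Let fp_rv := rv_fplus f_rv.
Let fm_rv := rv_fminus f_rv.
Let fp_ge0 := fplus_ge0 f.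
Let fm_ge0 := fminus_ge0 f.

Lemma quantR_norm_le {u : T -> R} y : L2 u ->
  `|quantR f u y| <= `|f y| * RI (fun x => `|u x|).
Proof.
move=> hu; rewrite -(fplusDfminus f y) mulrDl; apply: le_trans (ler_normB _ _) _.
by apply: lerD; exact: min_kernel_norm_le.
Qed.

Lemma quantR_rv {u : T -> R} : L2 u -> L2 (quantR f u).
Proof.
move=> hu; apply: (rv_dominated (RI (fun x => `|u x|)) _ f_rv).
  by apply: measurable_funB; exact: measurable_min_kernel.
by move=> y; rewrite mulrC; exact: quantR_norm_le.
Qed.

Lemma Rintegral_sqr_quantR_le {u : T -> R} : L2 u ->
  RI (fun y => quantR f u y ^+ 2) <= RI (fun y => f y ^+ 2) * RI (fun x => u x ^+ 2).
Proof.
move=> hu; rewrite -(RintegralZr _ measurableT f_rv.2).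
apply: le_Rintegral => //; first exact: (quantR_rv hu).2.
  by apply: eq_Rintegrable _ (RintegrableZ _ f_rv.2) => y; rewrite mulrC.
move=> y _ /=; apply: le_trans (sqr_le_of_normr_le (quantR_norm_le y hu)) _.
rewrite exprMn real_normK ?num_real //.
by rewrite ler_wpM2l ?sqr_ge0 // sqr_Rintegral_norm_le.
Qed.

Lemma quantR_lin a b {u v : T -> R} y : L2 u -> L2 v ->
  quantR f (fun x => a * u x + b * v x) y = a * quantR f u y + b * quantR f v y.
Proof. by move=> hu hv; rewrite /quantR !min_kernel_lin //; ring. Qed.

Lemma quantRD {u v : T -> R} y : L2 u -> L2 v ->
  quantR f (fun x => u x + v x) y = quantR f u y + quantR f v y.
Proof.
move=> hu hv; have := quantR_lin 1 1 y hu hv; rewrite !mul1r => <-.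
by congr quantR; apply/funext => x; rewrite !mul1r.
Qed.

Lemma quantR_ae_eq {u1 u2 : T -> R} y :
  measurable_fun setT u1 -> measurable_fun setT u2 ->
  {ae P, forall x, u1 x = u2 x} -> quantR f u1 y = quantR f u2 y.
Proof.
move=> mu1 mu2 u12; rewrite /quantR.
by rewrite (min_kernel_ae_eq fp_rv y mu1 mu2 u12) (min_kernel_ae_eq fm_rv y mu1 mu2 u12).
Qed.

Lemma quantR_sym {u v : T -> R} : L2 u -> L2 v ->
  RI (fun y => quantR f u y * v y) = RI (fun x => u x * quantR f v x).
Proof.
move=> hu hv.
rewrite (eq_Rintegral _ (g := fun y => min_kernel (fplus f) u y * v y -
  min_kernel (fminus f) u y * v y)); last by move=> y _; rewrite /quantR; ring.
rewrite [RHS](eq_Rintegral _ (g := fun x => u x * min_kernel (fplus f) v x -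
  u x * min_kernel (fminus f) v x)); last by move=> x _; rewrite /quantR; ring.
have [kpu kmu] := (min_kernel_rv fp_rv fp_ge0 hu, min_kernel_rv fm_rv fm_ge0 hu).
have [kpv kmv] := (min_kernel_rv fp_rv fp_ge0 hv, min_kernel_rv fm_rv fm_ge0 hv).
by rewrite !RintegralB ?min_kernel_sym //; exact: rv_Rintegrable_mul.
Qed.

Lemma quantR_sym_comb a b {u1 v1 u2 v2 : T -> R} : L2 u1 -> L2 v1 -> L2 u2 -> L2 v2 ->
  RI (fun y => a * (quantR f u1 y * v1 y) + b * (quantR f u2 y * v2 y)) =
  RI (fun x => a * (u1 x * quantR f v1 x) + b * (u2 x * quantR f v2 x)).
Proof.
move=> hu1 hv1 hu2 hv2.
have i1 := rv_Rintegrable_mul (quantR_rv hu1) hv1.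
have i2 := rv_Rintegrable_mul (quantR_rv hu2) hv2.
have j1 := rv_Rintegrable_mul hu1 (quantR_rv hv1).
have j2 := rv_Rintegrable_mul hu2 (quantR_rv hv2).
by rewrite !RintegralD ?RintegralZl ?quantR_sym //; exact: RintegrableZ.
Qed.

End RealQuantization.

End SquareIntegrable.

Section ComplexParts.
Context {R : realType}.
Implicit Types (r : R) (z w : complex R).
Local Notation Re := complex.Re.
Local Notation Im := complex.Im.

Lemma complex_ext z w : Re z = Re w -> Im z = Im w -> z = w.
Proof. by case: z => a b; case: w => c e /= -> ->. Qed.

Lemma Re_addc z w : Re (z + w) = Re z + Re w. Proof. by case: z; case: w. Qed.
Lemma Im_addc z w : Im (z + w) = Im z + Im w. Proof. by case: z; case: w. Qed.
Lemma Re_subc z w : Re (z - w) = Re z - Re w. Proof. by case: z; case: w. Qed.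
Lemma Im_subc z w : Im (z - w) = Im z - Im w. Proof. by case: z; case: w. Qed.

Lemma Re_mulc z w : Re (z * w) = Re z * Re w - Im z * Im w.
Proof. by case: z; case: w. Qed.

Lemma Im_mulc z w : Im (z * w) = Re z * Im w + Im z * Re w.
Proof. by case: z => a b; case: w => c e /=; ring. Qed.

Lemma Re_realc_mul r w : Re ((r%:C)%C * w) = r * Re w.
Proof. by case: w => c e /=; ring. Qed.

Lemma Im_realc_mul r w : Im ((r%:C)%C * w) = r * Im w.
Proof. by case: w => c e /=; ring. Qed.

Lemma Re_conjc_mul z w : Re (conjc z * w) = Re z * Re w + Im z * Im w.
Proof. by case: z => a b; case: w => c e /=; ring. Qed.

Lemma Im_conjc_mul z w : Im (conjc z * w) = Re z * Im w - Im z * Re w.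
Proof. by case: z => a b; case: w => c e /=; ring. Qed.

End ComplexParts.

Section ComplexQuantization.
Context {d : measure_display} {T : measurableType d} {R : realType}.
Variable P : probability T R.
Local Notation C := (complex R).
Local Notation Re := complex.Re.
Local Notation Im := complex.Im.
Local Notation RI := (Rintegral P setT).
Local Notation L2 := (is_random_variable P).

Definition rv_parts (g : T -> C) := L2 (fun x => Re (g x)) /\ L2 (fun x => Im (g x)).

Lemma inH_rv_parts g : inH P g <-> rv_parts g.
Proof.
split=> [[mr [mi ig]] | [hr hi]]; last first.
  have ig := RintegrableD P hr.2 hi.2.
  by split; [exact: hr.1 | split; [exact: hi.1 |]].
have cabs2_ge0 x : 0 <= cabs2 (g x) by rewrite addr_ge0 ?sqr_ge0.
split; split => //; apply: (le_Rintegrable P) ig; try exact: measurable_funX.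
- by move=> x; rewrite !ger0_norm ?sqr_ge0 // lerDl sqr_ge0.
- by move=> x; rewrite !ger0_norm ?sqr_ge0 // lerDr sqr_ge0.
Qed.

Lemma rv_partsZ a {g : T -> C} : rv_parts g -> rv_parts (fun x => a * g x).
Proof.
move=> [hr hi]; split.
- apply: eq_rv _ (rv_lin P (Re a) (- Im a) hr hi) => x.
  by rewrite Re_mulc; ring.
- apply: eq_rv _ (rv_lin P (Im a) (Re a) hr hi) => x.
  by rewrite Im_mulc; ring.
Qed.

Lemma Rintegral_cabs2 {g : T -> C} : rv_parts g ->
  RI (fun x => cabs2 (g x)) = RI (fun x => Re (g x) ^+ 2) + RI (fun x => Im (g x) ^+ 2).
Proof. by move=> [hr hi]; rewrite -(RintegralD measurableT hr.2 hi.2). Qed.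

Lemma cintegrable_min_kernel {F : T -> R} {g : T -> C} y :
  L2 F -> (forall x, 0 <= F x) -> rv_parts g ->
  cintegrable P (fun x => ((Num.min (F x) (F y))%:C)%C * g x).
Proof.
move=> hF F0 [hr hi]; split.
- apply: eq_Rintegrable _ (Rintegrable_min_kernel P hF F0 y hr) => x.
  by rewrite Re_realc_mul.
- apply: eq_Rintegrable _ (Rintegrable_min_kernel P hF F0 y hi) => x.
  by rewrite Im_realc_mul.
Qed.

Lemma Re_quant f g y : Re (quant P f g y) = quantR P f (fun x => Re (g x)) y.
Proof.
rewrite /quant /quant_nonneg /cint Re_subc /= /quantR /min_kernel.
by congr (_ - _); apply: eq_Rintegral => x _; rewrite Re_realc_mul.
Qed.

Lemma Im_quant f g y : Im (quant P f g y) = quantR P f (fun x => Im (g x)) y.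
Proof.
rewrite /quant /quant_nonneg /cint Im_subc /= /quantR /min_kernel.
by congr (_ - _); apply: eq_Rintegral => x _; rewrite Im_realc_mul.
Qed.

Section Operator.
Context {f : T -> R} (f_rv : L2 f).

Lemma quant_integrands_cintegrable {g : T -> C} y : rv_parts g ->
  cintegrable P (fun x => ((Num.min (fplus f x) (fplus f y))%:C)%C * g x) /\
  cintegrable P (fun x => ((Num.min (fminus f x) (fminus f y))%:C)%C * g x).
Proof.
move=> hg; split.
- exact: cintegrable_min_kernel y (rv_fplus P f_rv) (fplus_ge0 f) hg.
- exact: cintegrable_min_kernel y (rv_fminus P f_rv) (fminus_ge0 f) hg.
Qed.

Lemma quant_rv_parts {g : T -> C} : rv_parts g -> rv_parts (quant P f g).
Proof.
move=> [hr hi]; split.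
- by apply: eq_rv _ (quantR_rv P f_rv hr) => y; rewrite Re_quant.
- by apply: eq_rv _ (quantR_rv P f_rv hi) => y; rewrite Im_quant.
Qed.

Lemma hnorm_quant_le {g : T -> C} :
  rv_parts g -> hnorm P (quant P f g) <= rnorm P f * hnorm P g.
Proof.
move=> hg; have [hr hi] := hg.
rewrite /hnorm /rnorm -sqrtrM; last by apply: Rintegral_ge0 => x _; exact: sqr_ge0.
apply: ler_wsqrtr; rewrite !Rintegral_cabs2 //; last exact: quant_rv_parts.
under eq_Rintegral => y _ do rewrite Re_quant.
under [X in _ + X <= _]eq_Rintegral => y _ do rewrite Im_quant.
by rewrite mulrDr; apply: lerD; exact: Rintegral_sqr_quantR_le.
Qed.

Lemma quant_ae_eq {g1 g2 : T -> C} y : rv_parts g1 -> rv_parts g2 ->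
  {ae P, forall x, g1 x = g2 x} -> quant P f g1 y = quant P f g2 y.
Proof.
move=> [[m1r _] [m1i _]] [[m2r _] [m2i _]] g12.
by apply: complex_ext; rewrite ?Re_quant ?Im_quant; apply: quantR_ae_eq => //;
  apply: filterS g12 => x ->.
Qed.

Lemma quantZ a {g : T -> C} y :
  rv_parts g -> quant P f (fun x => a * g x) y = a * quant P f g y.
Proof.
move=> [hr hi]; apply: complex_ext.
- rewrite Re_quant Re_mulc Re_quant Im_quant -mulNr.
  rewrite -(quantR_lin P f_rv _ _ _ hr hi).
  by congr quantR; apply/funext => x; rewrite Re_mulc; ring.
- rewrite Im_quant Im_mulc Re_quant Im_quant [RHS]addrC.
  rewrite -(quantR_lin P f_rv _ _ _ hr hi).
  by congr quantR; apply/funext => x; rewrite Im_mulc addrC.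
Qed.

Lemma quantD {g h : T -> C} y : rv_parts g -> rv_parts h ->
  quant P f (fun x => g x + h x) y = quant P f g y + quant P f h y.
Proof.
move=> [hgr hgi] [hhr hhi]; apply: complex_ext.
- rewrite Re_quant Re_addc !Re_quant -quantRD //.
  by congr quantR; apply/funext => x; rewrite Re_addc.
- rewrite Im_quant Im_addc !Im_quant -quantRD //.
  by congr quantR; apply/funext => x; rewrite Im_addc.
Qed.

Lemma quant_selfadjoint {g h : T -> C} : rv_parts g -> rv_parts h ->
  inner P (quant P f g) h = inner P g (quant P f h).
Proof.
move=> [hgr hgi] [hhr hhi]; rewrite /inner /cint; congr (_ +i* _)%C.
- transitivity (RI (fun y => 1 * (quantR P f (fun x => Re (g x)) y * Re (h y)) +
                             1 * (quantR P f (fun x => Im (g x)) y * Im (h y)))).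
    by apply: eq_Rintegral => y _; rewrite Re_conjc_mul Re_quant Im_quant !mul1r.
  rewrite quantR_sym_comb //; apply: eq_Rintegral => x _.
  by rewrite Re_conjc_mul Re_quant Im_quant !mul1r.
- transitivity (RI (fun y => 1 * (quantR P f (fun x => Re (g x)) y * Im (h y)) +
                             (-1) * (quantR P f (fun x => Im (g x)) y * Re (h y)))).
    by apply: eq_Rintegral => y _; rewrite Im_conjc_mul Re_quant Im_quant; ring.
  rewrite quantR_sym_comb //; apply: eq_Rintegral => x _.
  by rewrite Im_conjc_mul Re_quant Im_quant; ring.
Qed.

End Operator.

End ComplexQuantization.

Theorem mainTheorem7 (d : measure_display) (T : measurableType d) (R : realType)
  (P : probability T R) (f : T -> R) :
  is_random_variable P f ->
  well_defined_bounded_selfadjoint P (quant P f) f /\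
  ((forall x, 0 <= f x) ->
     forall g : T -> complex R, inH P g -> hnorm P (quant P f g) <= rnorm P f * hnorm P g).
Proof.
move=> f_rv.
have parts g : inH P g -> rv_parts P g := (inH_rv_parts P g).1.
have bound g (hg : inH P g) := hnorm_quant_le P f_rv (parts g hg).
split; last by move=> _; exact: bound.
split.
  by move=> g /parts hg; apply: aeW => y; exact: quant_integrands_cintegrable.
split; first by move=> g /parts/(quant_rv_parts P f_rv)/inH_rv_parts.
split.
  by move=> g1 g2 /parts h1 /parts h2 e; apply: aeW => y; exact: quant_ae_eq.
split.
  move=> a b g h /parts hg /parts hh; apply: aeW => y.
  by rewrite quantD ?quantZ //; exact: rv_partsZ.
split; first by exists (rnorm P f); split; [exact: sqrtr_ge0 | exact: bound].
by move=> g h /parts hg /parts hh; exact: quant_selfadjoint.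
Qed.
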